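(* Let $G$ be a tree on vertex set $[n]$, and let $\mathcal{G}$ be a DAG with skeleton $G$. Let $i$ be an internal (non-leaf) vertex of $G$ and let $T$ be a subtree of $G$. Let $\mathcal{G}'$ be the DAG on vertex set $[n+1]$ obtained from $\mathcal{G}$ by adding the vertex $n+1$ and the edge $i\to n+1$. Let $\mathcal{H}$ and $\mathcal{H}'$ be the directed graphs identical to $\mathcal{G}$ and $\mathcal{G}'$ respectively, except that the direction of every edge of $T$ is reversed. If $\{\mathcal{G},\mathcal{H}\}$ is an essential flip, then $\{\mathcal{G}',\mathcal{H}'\}$ is an essential flip.
   Context: DAG means directed acyclic graph; its skeleton is the undirected graph with the same adjacencies. A v-structure in a DAG is an induced subgraph $a\to b\leftarrow c$ with $a,c$ non-adjacent. Two DAGs are Markov equivalent iff they have the same skeleton and the same v-structures. An edge $a\to b$ of a DAG $\mathcal{D}$ is essential if $a\to b$ appears in every DAG Markov equivalent to $\mathcal{D}$; $a$ is then an essential parent of $b$. The essential graph of $\mathcal{D}$ is the partially directed graph on the skeleton of $\mathcal{D}$ in which essential edges are directed as in $\mathcal{D}$ and all other edges are undirected. The characteristic imset $c_\mathcal{D}$ of a DAG on $[n]$ is the 0/1-vector indexed by $S\subseteq[n]$, $|S|\ge 2$, with $c_\mathcal{D}(S)=1$ iff some $j\in S$ satisfies $S\subseteq \mathrm{pa}_\mathcal{D}(j)\cup\{j\}$. For DAGs $\mathcal{G},\mathcal{H}$ with common skeleton a tree $G$, let $N_j=\{S\cup\{j\}: S\subseteq \mathrm{ne}_G(j),\ |S|\ge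 2\}$ and $\Delta(\mathcal{G},\mathcal{H})=\{j: c_\mathcal{G}|_{N_j}\neq c_\mathcal{H}|_{N_j}\}$ (equivalently, the vertices at which one DAG has a v-structure the other does not). For a set $S$ of vertices of a tree, $\operatorname{span}(S)$ denotes the vertex set of the smallest subtree containing $S$. Two non-Markov-equivalent DAGs (or their essential graphs) $\mathcal{G},\mathcal{H}$ with common tree skeleton $G$ form an essential flip if, writing $\Delta=\Delta(\mathcal{G},\mathcal{H})$, the essential graphs of $\mathcal{G}$ and of $\mathcal{H}$ restricted to $\operatorname{span}(\Delta)$ contain no undirected edges, and every edge of $G|_{\operatorname{span}(\Delta)}$ is directed differently in the essential graphs of $\mathcal{G}$ and $\mathcal{H}$. *)

(* Vertex set [n] is rendered as 'I_n (0-indexed);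
   the vertex n+1 of [n+1] is ord_max : 'I_n.+1, and an old vertex
   j : 'I_n is embedded as lift ord_max j (same numeric value). *)
From mathcomp Require Import all_boot.
Set Implicit Arguments. Unset Strict Implicit. Unset Printing Implicit Defensive.

Section Graphs.
Variable n : nat.
Local Notation V := ('I_n).

Definition simple_graph (G : rel V) : Prop :=
  (forall x y, G x y = G y x) /\ (forall x, ~~ G x x).

Definition num_edges (G : rel V) : nat :=
  #|[set p : V * V | G p.1 p.2 && (val p.1 < val p.2)]|.

Definition is_tree (G : rel V) : Prop :=
  [/\ simple_graph G, 0 < n, (forall x y, connect G x y) & num_edges G = n.-1].

Definition induced (G : rel V) (U : {set V}) : rel V :=
  fun a b => [&& G a b, a \in U & b \in U].

(* Vertex set of a subtree of the tree G: nonempty and the induced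
   subgraph is connected (in a tree, the edges of a subtree on U are
   exactly the G-edges inside U). *)
Definition is_subtree (G : rel V) (U : {set V}) : bool :=
  (U != set0) && [forall x in U, forall y in U, connect (induced G U) x y].

Definition span (G : rel V) (S : {set V}) : {set V} :=
  [set x | [forall U : {set V}, (S \subset U) ==> 
             (is_subtree G U ==> (x \in U))]].

Definition is_internal (G : rel V) (i : V) : bool := 1 < #|[set j | G i j]|.

(* A directed graph is a relation D : D a b means a -> b. *)
Definition adj (D : rel V) : rel V := fun a b => D a b || D b a.

(* no directed cycle (this also excludes loops and 2-cycles) *)
Definition dag (D : rel V) : Prop := forall x y, D x y -> ~~ connect D y x.

Definition vstruct (D : rel V) (a b c : V) : bool :=
  [&& D a b, D c b, a != c & ~~ adj D a c].

Definition markov_equiv (D1 D2 : rel V) : Prop :=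
  [/\ dag D1, dag D2, (forall a b, adj D1 a b = adj D2 a b) &
      (forall a b c, vstruct D1 a b c = vstruct D2 a b c)].

Definition essential (D : rel V) (a b : V) : Prop :=
  forall D' : rel V, dag D' -> markov_equiv D D' -> D' a b.

(* In the essential graph of D, the edge {a,b} is undirected iff it is
   an edge of the skeleton and neither orientation is essential. *)
Definition eg_undirected (D : rel V) (a b : V) : Prop :=
  adj D a b /\ ~ essential D a b /\ ~ essential D b a.

Definition pa (D : rel V) (j : V) : {set V} := [set k | D k j].

(* c_D(S) = 1 iff some j in S has S \subset pa(j) \cup {j}  (for |S| >= 2) *)
Definition cimset (D : rel V) (S : {set V}) : bool :=
  [exists j in S, S \subset j |: pa D j].

Definition ne (G : rel V) (j : V) : {set V} := [set k | G j k].

Definition Delta (G : rel V) (D1 D2 : rel V) : {set V} :=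
  [set j | [exists S : {set V}, [&& S \subset ne G j, 1 < #|S| &
                                   cimset D1 (j |: S) != cimset D2 (j |: S)]]].

Definition essential_flip (G : rel V) (D1 D2 : rel V) : Prop :=
  [/\ is_tree G, dag D1 /\ dag D2,
      (forall a b, adj D1 a b = G a b) /\ (forall a b, adj D2 a b = G a b),
      ~ markov_equiv D1 D2 &
      forall a b, a \in span G (Delta G D1 D2) -> b \in span G (Delta G D1 D2) -> G a b ->
        [/\ ~ eg_undirected D1 a b, ~ eg_undirected D2 a b &
            ~ ((essential D1 a b <-> essential D2 a b) /\
               (essential D1 b a <-> essential D2 b a))]].

(* Reverse every edge of D with both endpoints in U (the edges of the
   subtree with vertex set U). *)
Definition reverse (D : rel V) (U : {set V}) : rel V :=
  fun a b => if [&& a \in U, b \in U & adj D a b] then D b a else D a b.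

End Graphs.

Definition ext_dag (n : nat) (D : rel 'I_n) (i : 'I_n) : rel 'I_n.+1 :=
  fun x y => match unlift ord_max x, unlift ord_max y with
             | Some a, Some b => D a b
             | Some a, None => a == i
             | _, _ => false
             end.

Definition ext_und (n : nat) (G : rel 'I_n) (i : 'I_n) : rel 'I_n.+1 :=
  fun x y => match unlift ord_max x, unlift ord_max y with
             | Some a, Some b => G a b
             | Some a, None => a == i
             | None, Some b => b == i
             | None, None => false
             end.

From mathcomp Require Import all_boot.
From Stdlib Require Import FunctionalExtensionality.
Set Implicit Arguments. Unset Strict Implicit. Unset Printing Implicit Defensive.

(* The new leaf n+1 hangs off i by the arrow i -> n+1, which lies outside the
   reversed subtree and so has the same orientation in G' and H'.  Being a
   sink with the single parent i, n+1 lies in no v-structure, and at i every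
   imset value on a set containing n+1 and another neighbour of i is 0 in both
   DAGs; hence Delta(G',H') is contained in Delta(G,H), and so is its span,
   because every subtree of G is a subtree of G'.  A DAG Markov equivalent to
   G' restricts to one Markov equivalent to G, and a DAG Markov equivalent to
   G extends to one equivalent to G', so an old edge is essential in G' iff it
   is essential in G, and the flip conditions on span(Delta) carry over
   unchanged. *)

Lemma homo_connect (T T' : finType) (f : T -> T') (e : rel T) (e' : rel T') :
  {homo f : x y / e x y >-> e' x y} ->
  {homo f : x y / connect e x y >-> connect e' x y}.
Proof.
move=> fe x _ /connectP[p pth ->]; apply/connectP; exists (map f p).
  exact: homo_path pth.
by rewrite last_map.
Qed.

Lemma connect_sink (T : finType) (e : rel T) (s y : T) :
  (forall z, ~~ e s z) -> connect e s y -> y = s.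
Proof.
by move=> sink /connectP[[|z p] /= pth ->] //; rewrite (negbTE (sink z)) in pth.
Qed.

Lemma card_gt1_neq (T : finType) (S : {set T}) (x : T) :
  1 < #|S| -> exists2 s, s \in S & s != x.
Proof.
case/card_gt1P => [y [z [yS zS yz]]].
by case: (eqVneq y x) => [yx|]; [exists z; rewrite // -yx eq_sym | exists y].
Qed.

Section Restriction.
Variables m n : nat.
Variable f : 'I_m -> 'I_n.
Implicit Type E : rel 'I_n.

Lemma dag_relpre E : dag E -> dag (relpre f E).
Proof.
move=> dE x y /= /dE; apply: contra; exact: homo_connect.
Qed.

Lemma markov_equiv_relpre E1 E2 : injective f ->
  markov_equiv E1 E2 -> markov_equiv (relpre f E1) (relpre f E2).
Proof.
move=> f_inj [d1 d2 adj12 vs12]; split; try exact: dag_relpre.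
  by move=> a b; have := adj12 (f a) (f b).
by move=> a b c; have := vs12 (f a) (f b) (f c); rewrite /vstruct /= (inj_eq f_inj).
Qed.

End Restriction.

Definition edge_set (n : nat) (G : rel 'I_n) : {set 'I_n * 'I_n} :=
  [set p | G p.1 p.2 && (val p.1 < val p.2)].

Section Extension.
Variable n : nat.
Local Notation lf := (@lift n.+1 ord_max).
Local Notation lift2 := (fun p : 'I_n * 'I_n => (lf p.1, lf p.2)).
Implicit Types (E G : rel 'I_n) (i k a b : 'I_n).

Lemma ext_dag_liftE E i a b : ext_dag E i (lf a) (lf b) = E a b.
Proof. by rewrite /ext_dag !liftK. Qed.

Lemma ext_dag_lift_max E i a : ext_dag E i (lf a) ord_max = (a == i).
Proof. by rewrite /ext_dag liftK unlift_none. Qed.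

Lemma ext_dag_max E i y : ext_dag E i ord_max y = false.
Proof. by rewrite /ext_dag unlift_none. Qed.

Lemma ext_und_liftE G i a b : ext_und G i (lf a) (lf b) = G a b.
Proof. by rewrite /ext_und !liftK. Qed.

Lemma ext_und_lift_max G i a : ext_und G i (lf a) ord_max = (a == i).
Proof. by rewrite /ext_und liftK unlift_none. Qed.

Lemma ext_und_max_lift G i a : ext_und G i ord_max (lf a) = (a == i).
Proof. by rewrite /ext_und liftK unlift_none. Qed.

Lemma ext_und_max_max G i : ext_und G i ord_max ord_max = false.
Proof. by rewrite /ext_und unlift_none. Qed.

Lemma relpre_lift_ext_dag E i : relpre lf (ext_dag E i) = E :> rel _.
Proof. by do 2 apply: functional_extensionality => ?; rewrite /= ext_dag_liftE. Qed.

Lemma connect_ext_dag_max E i y : connect (ext_dag E i) ord_max y -> y = ord_max.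
Proof. by apply: connect_sink => z; rewrite ext_dag_max. Qed.

Lemma connect_ext_dag_lift E i a b :
  connect (ext_dag E i) (lf a) (lf b) = connect E a b.
Proof.
apply/idP/idP; last by apply: homo_connect => x y; rewrite ext_dag_liftE.
case/connectP => p; elim: p a => [|z p IHp] a /=; first by move=> _ /lift_inj ->.
case: (unliftP ord_max z) => [c ->|->] /andP[Eaz pth] lst.
  by rewrite ext_dag_liftE in Eaz; apply: connect_trans (connect1 Eaz) (IHp c pth lst).
have : connect (ext_dag E i) ord_max (lf b) by apply/connectP; exists p.
by move/connect_ext_dag_max/eqP; rewrite eq_sym (negbTE (neq_lift _ _)).
Qed.

Lemma dag_ext_dag E i : dag E -> dag (ext_dag E i).
Proof.
move=> dE x y; case: (unliftP ord_max x) => [a ->|->]; last by rewrite ext_dag_max.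
case: (unliftP ord_max y) => [b ->|-> _].
  by rewrite ext_dag_liftE connect_ext_dag_lift; exact: dE.
by apply/negP => /connect_ext_dag_max/eqP; rewrite eq_sym (negbTE (neq_lift _ _)).
Qed.

Lemma adj_ext_dag E i x y : adj (ext_dag E i) x y = ext_und (adj E) i x y.
Proof.
case: (unliftP ord_max x) => [a ->|->]; case: (unliftP ord_max y) => [b ->|->].
- by rewrite /adj !ext_dag_liftE ext_und_liftE.
- by rewrite /adj ext_dag_lift_max ext_dag_max orbF ext_und_lift_max.
- by rewrite /adj ext_dag_lift_max ext_dag_max ext_und_max_lift.
- by rewrite /adj ext_dag_max ext_und_max_max.
Qed.

Lemma vstruct_ext_dag E i x y z :
  vstruct (ext_dag E i) x y z =
  if (unlift ord_max x, unlift ord_max y, unlift ord_max z) is (Some a, Some b, Some c)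
  then vstruct E a b c else false.
Proof.
case: (unliftP ord_max x) => [a ->|->]; case: (unliftP ord_max y) => [b ->|->];
case: (unliftP ord_max z) => [c ->|->];
  rewrite ?liftK ?unlift_none /vstruct ?ext_dag_max ?andbF //.
  by rewrite !ext_dag_liftE (inj_eq lift_inj) adj_ext_dag ext_und_liftE.
by rewrite !ext_dag_lift_max; case: eqP => // ->; case: eqP => // ->; rewrite eqxx.
Qed.

Lemma markov_equiv_ext_dag E1 E2 i :
  markov_equiv E1 E2 -> markov_equiv (ext_dag E1 i) (ext_dag E2 i).
Proof.
case=> d1 d2 adj12 vs12; split; try exact: dag_ext_dag.
  move=> x y; rewrite !adj_ext_dag.
  case: (unliftP ord_max x) => [a ->|->]; case: (unliftP ord_max y) => [b ->|->];
  by rewrite ?ext_und_liftE ?ext_und_lift_max ?ext_und_max_lift ?ext_und_max_max.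
move=> x y z; rewrite !vstruct_ext_dag.
case: (unlift ord_max x) => // a; case: (unlift ord_max y) => // b.
by case: (unlift ord_max z).
Qed.

Lemma essential_ext_dag E i a b : dag E ->
  essential (ext_dag E i) (lf a) (lf b) <-> essential E a b.
Proof.
move=> dE; split=> ess D' dD' ME.
  by have := ess _ (dag_ext_dag dD') (markov_equiv_ext_dag i ME); rewrite ext_dag_liftE.
have := markov_equiv_relpre (@lift_inj _ ord_max) ME; rewrite relpre_lift_ext_dag.
by move=> ME'; have := ess _ (dag_relpre (f:=lf) dD') ME'.
Qed.

Lemma max_notin_lift (X : {set 'I_n}) : ord_max \notin lf @: X.
Proof. by apply/imsetP => -[x _ /eqP]; rewrite (negbTE (neq_lift _ _)). Qed.

Lemma reverse_ext_dag E i (X : {set 'I_n}) :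
  reverse (ext_dag E i) (lf @: X) = ext_dag (reverse E X) i.
Proof.
apply: functional_extensionality => x; apply: functional_extensionality => y.
case: (unliftP ord_max x) => [a ->|->]; case: (unliftP ord_max y) => [b ->|->];
  rewrite /reverse ?(negbTE (max_notin_lift _)) ?andbF
          ?ext_dag_liftE ?ext_dag_lift_max ?ext_dag_max //.
by rewrite !(mem_imset _ _ lift_inj) adj_ext_dag ext_und_liftE.
Qed.

Lemma cimset_ext_dag_lift E i (X : {set 'I_n}) :
  cimset (ext_dag E i) (lf @: X) = cimset E X.
Proof.
apply/exists_inP/exists_inP => [[_ /imsetP[j jX ->] /subsetP sub]|[j jX /subsetP sub]].
  exists j => //; apply/subsetP => x xX.
  by have := sub _ (imset_f lf xX); rewrite !inE ext_dag_liftE (inj_eq lift_inj).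
exists (lf j); first exact: imset_f.
apply/subsetP => _ /imsetP[x xX ->]; have := sub x xX.
by rewrite !inE ext_dag_liftE (inj_eq lift_inj).
Qed.

Lemma cimset_ext_dag_pendant E i k (S : {set 'I_n.+1}) :
  k != i -> ord_max \in S -> lf k \in S -> cimset (ext_dag E i) (lf i |: S) = false.
Proof.
move=> ki maxS kS; apply/exists_inP => -[j _ /subsetP sub].
case: (unliftP ord_max j) => [m ->|->] in sub.
  have := sub ord_max; rewrite !inE maxS orbT ext_dag_max orbF.
  by rewrite (negbTE (neq_lift _ _)) => /(_ isT).
have := sub (lf k); rewrite !inE kS orbT ext_dag_lift_max eq_sym.
by rewrite (negbTE (neq_lift _ _)) (negbTE ki) => /(_ isT).
Qed.

Lemma Delta_ext_dag_sub G E1 E2 i : irreflexive G ->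
  Delta (ext_und G i) (ext_dag E1 i) (ext_dag E2 i) \subset lf @: Delta G E1 E2.
Proof.
move=> irrG; apply/subsetP => j'; rewrite inE => /existsP[S' /and3P[/subsetP sub card neq]].
case: (unliftP ord_max j') => [j ->|->] in sub neq *; last first.
  have [s sS ns] := card_gt1_neq (lf i) card; move: (sub s sS) ns; rewrite inE.
  case: (unliftP ord_max s) => [b ->|->]; rewrite ?ext_und_max_lift ?ext_und_max_max //.
  by move/eqP->; rewrite eqxx.
have [maxS | maxNS] := boolP (ord_max \in S').
  have /eqP ji : j == i by have := sub _ maxS; rewrite inE ext_und_lift_max.
  subst j; have [s sS ns] := card_gt1_neq ord_max card.
  case: (unliftP ord_max s) => [k ->|->] in sS ns; last by rewrite eqxx in ns.
  have ki : k != i.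
    by apply: contraTneq (sub _ sS) => ->; rewrite inE ext_und_liftE irrG.
  by rewrite !(cimset_ext_dag_pendant _ ki maxS sS) in neq.
pose S := [set x | lf x \in S'].
have eS : S' = lf @: S.
  apply/setP => x; case: (unliftP ord_max x) => [b ->|->].
    by rewrite (mem_imset _ _ lift_inj) inE.
  by rewrite (negbTE maxNS) (negbTE (max_notin_lift _)).
rewrite eS -imsetU1 !cimset_ext_dag_lift in neq.
rewrite eS card_imset in card; last exact: lift_inj.
rewrite (mem_imset _ _ lift_inj) inE; apply/existsP; exists S.
rewrite card neq !andbT; apply/subsetP => x xS.
by have := sub (lf x); rewrite !inE ext_und_liftE eS (mem_imset _ _ lift_inj); apply.
Qed.

Lemma lift2_inj : injective lift2.
Proof.
move=> [a b] [c d] e; congr (_, _); apply: (@lift_inj _ ord_max).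
  by have := congr1 fst e.
by have := congr1 snd e.
Qed.

Lemma edge_set_ext_und G i :
  edge_set (ext_und G i) = (lf i, ord_max) |: lift2 @: edge_set G.
Proof.
have max_notin_lift2 x y :
    (x == ord_max) || (y == ord_max) -> (x, y) \notin lift2 @: edge_set G.
  move=> xy; apply/imsetP => -[[a b] _ [ea eb]]; move: xy.
  by rewrite ea eb !(eq_sym _ ord_max) !(negbTE (neq_lift _ _)).
apply/setP => -[x y]; rewrite !inE /= xpair_eqE.
case: (unliftP ord_max x) => [a ->|->]; case: (unliftP ord_max y) => [b ->|->].
- rewrite ext_und_liftE !lift_max (eq_sym _ ord_max) (negbTE (neq_lift _ _)) andbF /=.
  by rewrite (mem_imset _ (a, b) lift2_inj) inE.
- rewrite ext_und_lift_max lift_max ltn_ord andbT (inj_eq lift_inj) eqxx andbT.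
  by rewrite (negbTE (max_notin_lift2 _ _ _)) ?orbF ?eqxx ?orbT.
- rewrite ext_und_max_lift ltnNge (leq_ord (lf b)) andbF (negbTE (neq_lift _ _)) /=.
  by rewrite (negbTE (max_notin_lift2 _ _ _)) ?eqxx.
- by rewrite ext_und_max_max (negbTE (neq_lift _ _)) (negbTE (max_notin_lift2 _ _ _)) ?eqxx.
Qed.

Lemma num_edges_ext_und G i : num_edges (ext_und G i) = (num_edges G).+1.
Proof.
change (#|edge_set (ext_und G i)| = #|edge_set G|.+1).
rewrite edge_set_ext_und cardsU1 card_imset; last exact: lift2_inj.
suff -> : (lf i, ord_max) \notin lift2 @: edge_set G by [].
by apply/imsetP => -[p _ /(congr1 snd) /eqP]; rewrite (negbTE (neq_lift _ _)).
Qed.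

Lemma is_tree_ext_und G i : is_tree G -> is_tree (ext_und G i).
Proof.
case=> [[symG irrG] n_gt0 connG edgesG].
have sym' : symmetric (ext_und G i).
  move=> x y; case: (unliftP ord_max x) => [a ->|->]; case: (unliftP ord_max y) => [b ->|->];
  by rewrite ?ext_und_liftE ?ext_und_lift_max ?ext_und_max_lift ?ext_und_max_max.
split => //.
- split => // x; case: (unliftP ord_max x) => [a ->|->];
  by rewrite ?ext_und_liftE ?ext_und_max_max ?irrG.
- have to_i x : connect (ext_und G i) x (lf i).
    case: (unliftP ord_max x) => [a ->|->]; last by apply: connect1; rewrite ext_und_max_lift.
    by apply: homo_connect (connG a i) => u v; rewrite ext_und_liftE.
  by move=> x y; rewrite (connect_trans (to_i x)) // (sym_connect_sym sym') to_i.
- by rewrite num_edges_ext_und edgesG prednK.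
Qed.

Lemma is_subtree_lift G i (U : {set 'I_n}) :
  is_subtree G U -> is_subtree (ext_und G i) (lf @: U).
Proof.
case/andP => /set0Pn[u uU] /forall_inP connU; apply/andP; split.
  by apply/set0Pn; exists (lf u); exact: imset_f.
apply/forall_inP => _ /imsetP[a aU ->]; apply/forall_inP => _ /imsetP[b bU ->].
apply: homo_connect (forall_inP (connU a aU) b bU) => x y.
by rewrite /induced ext_und_liftE !(mem_imset _ _ lift_inj).
Qed.

Lemma is_subtree_setT G : is_tree G -> is_subtree G [set: 'I_n].
Proof.
case=> _ n_gt0 connG _; apply/andP; split; first by apply/set0Pn; exists (Ordinal n_gt0).
apply/forall_inP => x _; apply/forall_inP => y _.
by rewrite (@eq_connect _ _ G) // => a b; rewrite /induced !inE !andbT.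
Qed.

Lemma span_ext_und_sub G i (S : {set 'I_n}) (S' : {set 'I_n.+1}) : is_tree G ->
  S' \subset lf @: S -> span (ext_und G i) S' \subset lf @: span G S.
Proof.
move=> treeG sS; apply/subsetP => x; rewrite inE => /forallP spanx.
have in_lift (U : {set 'I_n}) : S \subset U -> is_subtree G U -> x \in lf @: U.
  move=> sU treeU; have := spanx (lf @: U).
  by rewrite (subset_trans sS (imsetS _ sU)) (is_subtree_lift i treeU).
have /imsetP[y _ ex] := in_lift _ (subsetT S) (is_subtree_setT treeG); subst x.
rewrite (mem_imset _ _ lift_inj) inE; apply/forallP => U; apply/implyP => sU.
by apply/implyP => treeU; have := in_lift U sU treeU; rewrite (mem_imset _ _ lift_inj).
Qed.

End Extension.

Theorem mainTheorem3 (n : nat) (G D : rel 'I_n) (i : 'I_n) (T : {set 'I_n}) :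
  is_tree G ->
  dag D ->
  (forall a b, adj D a b = G a b) ->
  is_internal G i ->
  is_subtree G T ->
  essential_flip G D (reverse D T) ->
  essential_flip (ext_und G i) (ext_dag D i)
                 (reverse (ext_dag D i) (lift ord_max @: T)).
Proof.
move=> treeG dagD adjD _ _ [_ [_ dagH] [_ adjH] notME flipDH].
rewrite reverse_ext_dag; set H := reverse D T in dagH adjH notME flipDH *.
have irrG : irreflexive G by case: treeG => -[_ irrG] _ _ _ x; apply: negbTE.
have eD : adj D = G by do 2 apply: functional_extensionality => ?; rewrite adjD.
have eH : adj H = G by do 2 apply: functional_extensionality => ?; rewrite adjH.
split.
- exact: is_tree_ext_und.
- by split; apply: dag_ext_dag.
- by split=> x y; rewrite adj_ext_dag ?eD ?eH.
- by move/(markov_equiv_relpre (@lift_inj _ ord_max)); rewrite !relpre_lift_ext_dag.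
move=> x y xS yS Gxy.
have spanS := span_ext_und_sub i treeG (Delta_ext_dag_sub D H i irrG).
have /imsetP[a aS exa] := subsetP spanS x xS; have /imsetP[b bS exb] := subsetP spanS y yS.
subst x y; rewrite ext_und_liftE in Gxy.
have [undD undH dirDH] := flipDH a b aS bS Gxy.
have essD := essential_ext_dag i a b dagD; have essD' := essential_ext_dag i b a dagD.
have essH := essential_ext_dag i a b dagH; have essH' := essential_ext_dag i b a dagH.
rewrite /eg_undirected in undD undH *; rewrite !adj_ext_dag !ext_und_liftE.
by split; tauto.
Qed.
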